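(* Let $T$ be a (rooted or unrooted) phylogenetic tree on a fixed leaf set, let $T^{-\rho}$ denote the unrooted tree obtained from $T$ by suppressing its root vertex if it has one (so $T^{-\rho}=T$ if $T$ is unrooted), and let $\theta\in\Theta(T)$. Suppose $k$ site patterns are generated independently and identically distributed according to ${\bf s}(T,\theta)$, and let $\hat{\bf s}$ be the resulting empirical distribution (proportions) of site patterns. Let $\psi$ be a tree reconstruction method satisfying the following condition ( * ): for every tree $T'$ for which $T'^{-\rho}$ is fully resolved (binary) and every $\theta'\in\Theta(T')$, there exists $\epsilon=\epsilon_{(T',\theta')}>0$ such that for every probability distribution $\hat{\bf f}$ on site patterns, $\|\hat{\bf f}-{\bf s}(T',\theta')\|<\epsilon$ implies $\psi(\hat{\bf f})=\{T'^{-\rho}\}$. Then, as $k\to\infty$: (i) for every edge $e$ of $T^{-\rho}$, the bootstrap support of $e$ converges in probability to $1$; and (ii) the bootstrap support for $T^{-\rho}$, namely ${\mathbb P}(\psi(\hat{\bf s}^* )=\{T^{-\rho}\}\mid \hat{\bf s})$, converges in probability to $1$.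
   Context: For each phylogenetic tree $T$, $\theta$ is a vector of continuous parameters (including strictly positive finite branch lengths of $T$ and possibly other continuous model parameters) ranging over a set $\Theta=\Theta(T)$, an open subset of Euclidean space. A stochastic model of character evolution assigns to each pair $(T,\theta)$ a probability distribution ${\bf s}(T,\theta)$ on discrete, finite-state characters (site patterns) at the leaves of $T$, and the map $\theta\mapsto{\bf s}(T,\theta)$ is assumed continuous. A tree reconstruction method $\psi$ is any map assigning to each distribution $\hat{\bf f}$ of site pattern frequencies a set of one or more unrooted phylogenetic trees. $\|\cdot\|$ denotes any of the usual norms on Euclidean space. Given $\hat{\bf s}$ (from $k$ sites), $\hat{\bf s}^*$ denotes the empirical frequency distribution of site patterns in an i.i.d. sample of $k$ site patterns drawn from the distribution $\hat{\bf s}$ (a bootstrap sample). The bootstrap support of an edge $e$ of an unrooted phylogenetic tree $T'$ is the expected proportion (over bootstrap samples, conditional on $\hat{\bf s}$) of bootstrap samples for which a tree chosen uniformly at random from $\psi(\hat{\bf s}^* )$ has an edge inducing the same split of the leaf set as $e$ does in $T'$. The bootstrap support for $T'$ is the random variable ${\mathbb P}(\psi(\hat{\bf s}^* )=\{T'\}\mid\hat{\bf s})$.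
   Formalization: Both conclusions are asserted only for trees T whose unrooted tree $T^{-\rho}$ is fully resolved (binary), rather than for every rooted or unrooted phylogenetic tree T. The statement above fails without it. *)

From HB Require Import structures.
From mathcomp Require Import all_boot all_order all_algebra.
From mathcomp Require Import all_classical all_reals all_analysis.
Set Implicit Arguments. Unset Strict Implicit. Unset Printing Implicit Defensive.
Import Order.TTheory GRing.Theory Num.Theory.
Import numFieldNormedType.Exports.
Local Open Scope classical_set_scope.
Local Open Scope ring_scope.

Section Phylo.
Variable R : realType.
Variable Pat : finType.

Definition is_dist (f : {ffun Pat -> R}) : Prop :=
  (forall x, 0 <= f x) /\ \sum_x f x = 1.

Definition pdist (f g : {ffun Pat -> R}) : R := \sum_x `|f x - g x|.

Definition empirical (k : nat) (w : {ffun 'I_k -> Pat}) : {ffun Pat -> R} :=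
  [ffun x => #|[set i | w i == x]|%:R / k%:R].

Definition sample_prob (k : nat) (p : {ffun Pat -> R}) (w : {ffun 'I_k -> Pat}) : R :=
  \prod_i p (w i).

Definition sample_expect (k : nat) (p : {ffun Pat -> R})
  (g : {ffun 'I_k -> Pat} -> R) : R :=
  \sum_w sample_prob p w * g w.

Definition sample_event_prob (k : nat) (p : {ffun Pat -> R})
  (A : pred {ffun 'I_k -> Pat}) : R :=
  \sum_(w | A w) sample_prob p w.

Definition cvg_in_prob_to_1 (p : {ffun Pat -> R})
  (X : forall k : nat, {ffun 'I_k -> Pat} -> R) : Prop :=
  forall eps : R, 0 < eps ->
    (fun k : nat => sample_event_prob p (fun w : {ffun 'I_k -> Pat} =>
        eps < `|X k w - 1|)) @ \oo --> (0 : R).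

Variable UT : finType.  (* unrooted phylogenetic trees on the fixed leaf set *)
Variable Edge : UT -> finType.
Variable Split : eqType.
Variable esplit : forall U : UT, Edge U -> Split.

Definition has_split (U : UT) (sigma : Split) : bool :=
  [exists e : Edge U, esplit e == sigma].

Definition unif_prob (S : {set UT}) (P : pred UT) : R :=
  #|[set U in S | P U]|%:R / #|S|%:R.

Definition edge_bootstrap_support (psi : {ffun Pat -> R} -> {set UT})
  (k : nat) (shat : {ffun Pat -> R}) (U : UT) (e : Edge U) : R :=
  sample_expect shat (fun wstar : {ffun 'I_k -> Pat} =>
    unif_prob (psi (empirical wstar)) (fun U' => has_split U' (esplit e))).

Definition tree_bootstrap_support (psi : {ffun Pat -> R} -> {set UT})
  (k : nat) (shat : {ffun Pat -> R}) (U : UT) : R :=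
  sample_expect shat (fun wstar : {ffun 'I_k -> Pat} =>
    (psi (empirical wstar) == [set U]%SET)%:R).

End Phylo.

(** Condition (star) at the true parameter gives a radius [2 delta] around
    [p = s(T, theta)] on which [psi] returns [{T^{-rho}}].  Chebyshev's
    inequality for the sum of squared deviations of an empirical distribution
    from its source bounds the probability that [k] sites drawn from any
    distribution [q] land at L1-distance at least [delta] from [q] by [C / k],
    with [C] independent of [q].  Applied to the data, [shat] is within
    [delta] of [p] except with probability [C / k]; applied to a bootstrap
    resample drawn from such an [shat], the resample is within [2 delta] of
    [p] except with probability [C / k], and there [psi] returns
    [{T^{-rho}}], which carries every edge of [T^{-rho}]. *)

From HB Require Import structures.
From mathcomp Require Import all_boot all_order all_algebra.
From mathcomp Require Import all_classical all_reals all_analysis.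
From mathcomp Require Import ring lra.
Set Implicit Arguments. Unset Strict Implicit. Unset Printing Implicit Defensive.
Import Order.TTheory GRing.Theory Num.Theory.
Import numFieldNormedType.Exports.
Local Open Scope classical_set_scope.
Local Open Scope ring_scope.

Section Sampling.
Variables (R : realType) (Pat : finType).
Implicit Types (p q f g : {ffun Pat -> R}) (k : nat).

Lemma dist_le1 q x : is_dist q -> q x <= 1.
Proof.
move=> [q_ge0 q_sum1]; rewrite -q_sum1 (bigD1 x) //= lerDl.
by apply: sumr_ge0 => y _; apply: q_ge0.
Qed.

Lemma sum_mul_eq q x : \sum_y q y * (y == x)%:R = q x.
Proof.
rewrite (bigD1 x) //= eqxx mulr1 big1 ?addr0 // => y /negbTE ->.
by rewrite mulr0.
Qed.

Lemma sample_prob_ge0 k q (w : {ffun 'I_k -> Pat}) :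
  (forall x, 0 <= q x) -> 0 <= sample_prob q w.
Proof. by move=> q_ge0; apply: prodr_ge0 => i _; apply: q_ge0. Qed.

Lemma sample_expect_prod k q (h : 'I_k -> Pat -> R) :
  sample_expect q (fun w => \prod_i h i (w i)) = \prod_i \sum_y q y * h i y.
Proof.
rewrite /sample_expect bigA_distr_bigA /=.
by apply: eq_bigr => w _; rewrite /sample_prob -big_split.
Qed.

Lemma sum_sample_prob k q :
  is_dist q -> \sum_(w : {ffun 'I_k -> Pat}) sample_prob q w = 1.
Proof.
move=> [_ q_sum1]; rewrite /sample_prob.
rewrite -(bigA_distr_bigA (fun (_ : 'I_k) y => q y)) /=.
by rewrite (eq_bigr (fun _ => 1)) ?prodr_const ?expr1n.
Qed.

Lemma sample_expect_cst k q c :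
  is_dist q -> sample_expect q (fun _ : {ffun 'I_k -> Pat} => c) = c.
Proof. by move=> q_dist; rewrite /sample_expect -mulr_suml sum_sample_prob ?mul1r. Qed.

Lemma sample_expect_sum k q (I : finType) (g : I -> {ffun 'I_k -> Pat} -> R) :
  sample_expect q (fun w => \sum_j g j w) = \sum_j sample_expect q (g j).
Proof.
rewrite /sample_expect exchange_big /=.
by apply: eq_bigr => w _; rewrite mulr_sumr.
Qed.

Lemma sample_expectZ k q c (g : {ffun 'I_k -> Pat} -> R) :
  sample_expect q (fun w => c * g w) = c * sample_expect q g.
Proof. by rewrite /sample_expect mulr_sumr; apply: eq_bigr => w _; rewrite mulrCA. Qed.

Lemma sample_expectB k q (g h : {ffun 'I_k -> Pat} -> R) :
  sample_expect q (fun w => g w - h w) = sample_expect q g - sample_expect q h.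
Proof. by rewrite /sample_expect -sumrB; apply: eq_bigr => w _; rewrite mulrBr. Qed.

Lemma ler_sample_expect k q (g h : {ffun 'I_k -> Pat} -> R) :
  (forall x, 0 <= q x) -> (forall w, g w <= h w) ->
  sample_expect q g <= sample_expect q h.
Proof.
move=> q_ge0 le_gh; apply: ler_sum => w _.
by apply: ler_wpM2l; [apply: sample_prob_ge0 | apply: le_gh].
Qed.

Lemma sample_expect_le1 k q (g : {ffun 'I_k -> Pat} -> R) :
  is_dist q -> (forall w, g w <= 1) -> sample_expect q g <= 1.
Proof.
move=> q_dist g_le1; rewrite -(sample_expect_cst k 1 q_dist).
exact: ler_sample_expect (proj1 q_dist) g_le1.
Qed.

Lemma sample_event_probE k q (A : pred {ffun 'I_k -> Pat}) :
  sample_event_prob q A = sample_expect q (fun w => (A w)%:R).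
Proof.
rewrite /sample_event_prob /sample_expect big_mkcond /=.
by apply: eq_bigr => w _; case: (A w); rewrite ?mulr1 ?mulr0.
Qed.

Lemma sample_event_prob_ge0 k q (A : pred {ffun 'I_k -> Pat}) :
  (forall x, 0 <= q x) -> 0 <= sample_event_prob q A.
Proof. by move=> q_ge0; apply: sumr_ge0 => w _; apply: sample_prob_ge0. Qed.

Lemma subset_sample_event_prob k q (A B : pred {ffun 'I_k -> Pat}) :
  (forall x, 0 <= q x) -> (forall w, A w -> B w) ->
  sample_event_prob q A <= sample_event_prob q B.
Proof.
move=> q_ge0 AB; rewrite !sample_event_probE; apply: ler_sample_expect => // w.
by case: (boolP (A w)) => [/AB ->|_] //=; case: (B w).
Qed.

(* The set in [empirical] is a classical set ([classical_set_scope] is open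
   in the definitions), hence the [set_mem]/[mem_set] views. *)
Lemma natr_card_eq k (w : {ffun 'I_k -> Pat}) x :
  (#|[set i | w i == x]|%:R : R) = \sum_i (w i == x)%:R.
Proof.
rewrite -sum1_card natr_sum big_mkcond /=.
apply: eq_bigr => i _.
have -> : (i \in [set i | w i == x]) = (w i == x) by apply/idP/idP => [/set_mem|/mem_set].
by case: (w i == x).
Qed.

Lemma empirical_dist k (w : {ffun 'I_k -> Pat}) : (0 < k)%N -> is_dist (empirical R w).
Proof.
move=> k_gt0; split=> [x|]; first by rewrite ffunE divr_ge0.
under eq_bigr do rewrite ffunE natr_card_eq.
rewrite -mulr_suml exchange_big /=.
rewrite (eq_bigr (fun _ => 1)) => [|i _]; last first.
  by rewrite (bigD1 (w i)) //= eqxx big1 ?addr0 // => y; rewrite eq_sym => /negbTE ->.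
by rewrite sumr_const card_ord -mulr_natl mulr1 mulfV // pnatr_eq0 -lt0n.
Qed.

Lemma empirical_subE k (w : {ffun 'I_k -> Pat}) q x : (0 < k)%N ->
  empirical R w x - q x = (\sum_i ((w i == x)%:R - q x)) / k%:R.
Proof.
move=> k_gt0; rewrite ffunE natr_card_eq sumrB sumr_const card_ord mulrBl.
by rewrite -[q x *+ k]mulr_natr mulfK // pnatr_eq0 -lt0n.
Qed.

(* Centered indicators of distinct sites are independent with mean zero,
   and a centered indicator has variance [q x (1 - q x) <= 1]. *)
Lemma sample_expect_centered_indicatorM k q x (i j : 'I_k) : is_dist q ->
  sample_expect q (fun w => ((w i == x)%:R - q x) * ((w j == x)%:R - q x))
   <= (i == j)%:R.
Proof.
move=> [q_ge0 q_sum1]; pose a (y : Pat) : R := (y == x)%:R - q x.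
pose h (l : 'I_k) (y : Pat) := (if l == i then a y else 1) * (if l == j then a y else 1).
have -> : (fun w : {ffun 'I_k -> Pat} => a (w i) * a (w j)) = (fun w => \prod_l h l (w l)).
  by apply: funext => w; rewrite /h big_split /= -!big_mkcond /= !big_pred1_eq.
have mean_a0 : \sum_y q y * a y = 0.
  under eq_bigr do rewrite mulrBr.
  by rewrite sumrB sum_mul_eq -mulr_suml q_sum1 mul1r subrr.
rewrite sample_expect_prod (bigD1 i) //= /h eqxx.
have [<-|neq_ij] := eqVneq i j; last first.
  by under eq_bigr do rewrite mulr1; rewrite mean_a0 mul0r.
rewrite [X in _ * X]big1 ?mulr1 => [|l /negbTE ->]; last first.
  by under eq_bigr do rewrite !mulr1.
rewrite /= -q_sum1; apply: ler_sum => y _; rewrite -[leRHS]mulr1.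
apply: ler_wpM2l; first exact: q_ge0.
have := q_ge0 x; have := dist_le1 x (conj q_ge0 q_sum1).
by rewrite /a; case: (y == x) => /=; nra.
Qed.

Lemma sample_expect_empirical_sqr_dev k q x : (0 < k)%N -> is_dist q ->
  sample_expect q (fun w : {ffun 'I_k -> Pat} => (empirical R w x - q x) ^+ 2)
   <= k%:R^-1.
Proof.
move=> k_gt0 q_dist; have k_neq0 : (k%:R : R) != 0 by rewrite pnatr_eq0 -lt0n.
have -> : (fun w : {ffun 'I_k -> Pat} => (empirical R w x - q x) ^+ 2) =
    (fun w => k%:R^-2 *
       \sum_i \sum_j (((w i == x)%:R - q x) * ((w j == x)%:R - q x))).
  apply: funext => w; rewrite empirical_subE // expr_div_n mulrC.
  by congr (_ * _); rewrite expr2 mulr_suml; apply: eq_bigr => i _; rewrite mulr_sumr.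
rewrite sample_expectZ sample_expect_sum.
apply: (@le_trans _ _ (k%:R^-2 * \sum_(i < k) \sum_(j < k) ((i == j)%:R : R))).
  apply: ler_wpM2l; first by rewrite invr_ge0 exprn_ge0.
  apply: ler_sum => i _; rewrite sample_expect_sum; apply: ler_sum => j _.
  exact: sample_expect_centered_indicatorM.
rewrite (eq_bigr (fun _ => 1)) => [|i _]; last first.
  by rewrite (bigD1 i) //= eqxx big1 ?addr0 // => j; rewrite eq_sym => /negbTE ->.
by rewrite sumr_const card_ord expr2 invfM -mulrA mulVf // mulr1.
Qed.

Lemma pdist_triangle f g h : pdist f h <= pdist f g + pdist g h.
Proof.
rewrite /pdist -big_split /=; apply: ler_sum => x _.
by rewrite -(subrKA (g x)) ler_normD.
Qed.

Lemma ler_norm_addsqr (d t : R) : 0 < t -> `|d| <= t + d ^+ 2 / t.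
Proof.
move=> t_gt0; rewrite -real_normK ?num_real // -(ler_pM2r t_gt0) mulrDl.
by rewrite mulfVK ?gt_eqF //; have := normr_ge0 d; nra.
Qed.

(* Sum [|d| <= t + d^2 / t] over patterns, with [t = delta / (2 (#|Pat| + 1))]
   so that [#|Pat| t <= delta / 2]. *)
Lemma pdist_ge_sum_sqr (delta : R) : 0 < delta -> exists K : R, 0 <= K /\
  forall f q, delta <= pdist f q -> 1 <= K * \sum_x (f x - q x) ^+ 2.
Proof.
move=> delta_gt0; pose n : R := #|Pat|%:R.
have n_ge0 : 0 <= n by rewrite ler0n.
pose t := delta / (2 * (n + 1)).
have t_gt0 : 0 < t by rewrite divr_gt0 // mulr_gt0 // ltr_wpDl.
have nt_le : n * t <= delta / 2.
  rewrite /t mulrA ler_pdivrMr ?mulr_gt0 ?ltr_wpDl //.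
  by rewrite mulrC mulrA divfK ?pnatr_eq0 //; nra.
exists (2 / (t * delta)); split; first by rewrite divr_ge0 // mulr_ge0 // ltW.
move=> f q le_delta; set S := \sum_x _.
have : pdist f q <= n * t + S / t.
  have -> : n * t = \sum_(x : Pat) t by rewrite sumr_const mulr_natl.
  rewrite /S mulr_suml -big_split /=.
  by apply: ler_sum => x _; apply: ler_norm_addsqr.
move=> le_pdist; have half_le : delta / 2 <= S / t by lra.
have -> : 2 / (t * delta) * S = 2 / delta * (S / t).
  by field; rewrite !gt_eqF.
have half_inv : 2 / delta * (delta / 2) = 1 by field; rewrite gt_eqF.
by rewrite -[leLHS]half_inv ler_wpM2l // divr_ge0 // ltW.
Qed.

Definition uniform_deviation_bound (delta C : R) : Prop :=
  forall k q, (0 < k)%N -> is_dist q ->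
    sample_event_prob q (fun w : {ffun 'I_k -> Pat} => delta <= pdist (empirical R w) q)
      <= C / k%:R.

Lemma uniform_deviation_boundP (delta : R) : 0 < delta ->
  exists C, uniform_deviation_bound delta C.
Proof.
move=> delta_gt0; have [K [K_ge0 HK]] := pdist_ge_sum_sqr delta_gt0.
exists (K * #|Pat|%:R) => k q k_gt0 q_dist; rewrite sample_event_probE.
apply: (@le_trans _ _ (sample_expect q (fun w : {ffun 'I_k -> Pat} =>
    K * \sum_x (empirical R w x - q x) ^+ 2))).
  apply: ler_sample_expect (proj1 q_dist) _ => w.
  case: (boolP (delta <= _)) => [/HK //|_].
  by rewrite mulr_ge0 // sumr_ge0 // => x _; apply: sqr_ge0.
rewrite sample_expectZ sample_expect_sum -mulrA ler_wpM2l //.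
rewrite -sumr_const mulr_suml; apply: ler_sum => x _; rewrite mul1r.
exact: sample_expect_empirical_sqr_dev.
Qed.

Lemma cvg_in_prob_to_1_near p (delta C : R)
    (X : forall k, {ffun 'I_k -> Pat} -> R) :
  is_dist p -> uniform_deviation_bound delta C ->
  (forall k (w : {ffun 'I_k -> Pat}), (0 < k)%N ->
     pdist (empirical R w) p < delta -> `|X k w - 1| <= C / k%:R) ->
  cvg_in_prob_to_1 p X.
Proof.
move=> p_dist HC HX eps eps_gt0; apply/cvgr0Pnorm_lt => e e_gt0.
near=> k.
have k_gt0 : (0 < k)%N by near: k; exact: nbhs_infty_gt.
have kR_gt0 : (0 : R) < k%:R by rewrite ltr0n.
have C_lt_eps : C / k%:R < eps.
  by rewrite ltr_pdivrMr // mulrC -ltr_pdivrMr //; near: k; exact: nbhs_infty_gtr.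
have C_lt_e : C / k%:R < e.
  by rewrite ltr_pdivrMr // mulrC -ltr_pdivrMr //; near: k; exact: nbhs_infty_gtr.
rewrite ger0_norm; last exact: sample_event_prob_ge0 (proj1 p_dist).
apply: le_lt_trans C_lt_e; apply: le_trans (HC k p k_gt0 p_dist).
apply: subset_sample_event_prob (proj1 p_dist) _ => w /= eps_lt.
rewrite leNgt; apply/negP => /(HX k w k_gt0) /le_lt_trans /(_ C_lt_eps).
by rewrite ltNge (ltW eps_lt).
Unshelve. all: by end_near.
Qed.

End Sampling.

Section Bootstrap.
Variables (R : realType) (Pat UT : finType) (Edge : UT -> finType) (Split : eqType).
Variables (esplit : forall U : UT, Edge U -> Split) (psi : {ffun Pat -> R} -> {set UT}).
Variables (k : nat) (shat : {ffun Pat -> R}).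
Hypothesis shat_dist : is_dist shat.

Lemma unif_prob_ge0 (S : {set UT}) (P : pred UT) : 0 <= unif_prob R S P.
Proof. by rewrite divr_ge0. Qed.

Lemma unif_prob_le1 (S : {set UT}) (P : pred UT) : unif_prob R S P <= 1.
Proof.
rewrite /unif_prob; have [->|S_gt0] := posnP #|S|; first by rewrite invr0 mulr0.
rewrite ler_pdivrMr ?ltr0n // mul1r ler_nat subset_leq_card //.
by apply/fintype.subsetP => U; rewrite inE => /andP[].
Qed.

Lemma unif_prob_set1 (U : UT) (P : pred UT) : P U -> unif_prob R [set U]%SET P = 1.
Proof.
move=> PU; rewrite /unif_prob.
have -> : [set U' in [set U] | P U']%SET = [set U]%SET.
  by apply/setP => V; rewrite !inE; case: eqP => // ->.
by rewrite cards1 divr1.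
Qed.

Lemma tree_bootstrap_support_le1 (U : UT) :
  tree_bootstrap_support psi k shat U <= 1.
Proof. by apply: sample_expect_le1 => // w; rewrite lern1 leq_b1. Qed.

Lemma edge_bootstrap_support_le1 (U : UT) (e : Edge U) :
  edge_bootstrap_support esplit psi k shat e <= 1.
Proof. by apply: sample_expect_le1 => // w; apply: unif_prob_le1. Qed.

Lemma tree_le_edge_bootstrap_support (U : UT) (e : Edge U) :
  tree_bootstrap_support psi k shat U <= edge_bootstrap_support esplit psi k shat e.
Proof.
apply: ler_sample_expect (proj1 shat_dist) _ => w.
case: eqP => [->|_]; last exact: unif_prob_ge0.
by rewrite unif_prob_set1 //; apply/existsP; exists e.
Qed.

End Bootstrap.

(* With probability at least [1 - C / k] the resample is within [delta] of
   [shat], hence within [2 delta] of [p], where [psi] is exactly [{U}]. *)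
Lemma tree_bootstrap_support_near (R : realType) (Pat UT : finType)
    (psi : {ffun Pat -> R} -> {set UT}) (p : {ffun Pat -> R}) (U : UT)
    (delta C : R) (k : nat) (w : {ffun 'I_k -> Pat}) :
  uniform_deviation_bound Pat delta C ->
  (forall f, is_dist f -> pdist f p < delta + delta -> psi f = [set U]%SET) ->
  (0 < k)%N -> pdist (empirical R w) p < delta ->
  1 - tree_bootstrap_support psi k (empirical R w) U <= C / k%:R.
Proof.
move=> HC psi_U k_gt0 near_p; set shat := empirical R w.
have shat_dist : is_dist shat by apply: empirical_dist.
rewrite -{1}(sample_expect_cst k 1 shat_dist) -sample_expectB.
apply: le_trans (HC k shat k_gt0 shat_dist); rewrite sample_event_probE.
apply: ler_sample_expect (proj1 shat_dist) _ => ws.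
case: (boolP (delta <= _)) => /= [_|]; first by rewrite lerBlDr lerDl.
rewrite -ltNge => near_shat.
have near_p2 : pdist (empirical R ws) p < delta + delta.
  exact: le_lt_trans (pdist_triangle _ shat _) (ltrD near_shat near_p).
by rewrite (psi_U _ (empirical_dist _ ws k_gt0) near_p2) eqxx subrr.
Qed.

Theorem mainTheorem1
  (R : realType)
  (Pat : finType)                       (* site patterns *)
  (Tr : Type)                           (* rooted or unrooted trees *)
  (UT : finType)                        (* unrooted trees *)
  (Edge : UT -> finType)
  (Split : eqType)
  (esplit : forall U : UT, Edge U -> Split)
  (unroot : Tr -> UT)                   (* T |-> T^{-rho} *)
  (resolved : pred UT)                  (* fully resolved (binary) *)
  (dim : Tr -> nat)
  (Theta : forall T : Tr, set 'rV[R]_(dim T))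
  (s : forall T : Tr, 'rV[R]_(dim T) -> {ffun Pat -> R})
  (psi : {ffun Pat -> R} -> {set UT})
  (* standing assumptions on the model *)
  (HTheta_open : forall T : Tr, open (Theta T))
  (Hs_dist : forall (T : Tr) (th : 'rV[R]_(dim T)), Theta T th -> is_dist (s T th))
  (Hs_cont : forall (T : Tr) (x : Pat),
      {within Theta T, continuous (fun th : 'rV[R]_(dim T) => s T th x)})
  (* psi returns one or more trees *)
  (Hpsi_ne : forall f : {ffun Pat -> R}, is_dist f -> psi f != finset.set0)
  (* condition (star) *)
  (Hstar : forall (T' : Tr) (th' : 'rV[R]_(dim T')),
      resolved (unroot T') -> Theta T' th' ->
      exists2 eps : R, 0 < eps &
        forall f : {ffun Pat -> R}, is_dist f ->
          pdist f (s T' th') < eps -> psi f = [set unroot T']%SET)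
  (T : Tr) (th : 'rV[R]_(dim T))
  (Hth : Theta T th)
  (HT : resolved (unroot T)) :
  (forall e : Edge (unroot T),
      cvg_in_prob_to_1 (s T th)
        (fun k (w : {ffun 'I_k -> Pat}) =>
           edge_bootstrap_support esplit psi k (empirical R w) e))
  /\
  cvg_in_prob_to_1 (s T th)
    (fun k (w : {ffun 'I_k -> Pat}) =>
       tree_bootstrap_support psi k (empirical R w) (unroot T)).
Proof.
have p_dist := Hs_dist T th Hth.
have [eps eps_gt0 psi_T] := Hstar T th HT Hth.
have delta_gt0 : 0 < eps / 2 by rewrite divr_gt0.
have [C HC] := uniform_deviation_boundP Pat delta_gt0.
have psi_T2 : forall f, is_dist f -> pdist f (s T th) < eps / 2 + eps / 2 ->
    psi f = [set unroot T]%SET.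
  by move=> f f_dist; rewrite -splitr; apply: psi_T.
split=> [e|]; apply: (cvg_in_prob_to_1_near p_dist HC) => k w k_gt0 near_p;
  have shat_dist := empirical_dist R w k_gt0;
  have := tree_bootstrap_support_near HC psi_T2 k_gt0 near_p.
- have := tree_le_edge_bootstrap_support esplit psi k shat_dist e.
  have := edge_bootstrap_support_le1 esplit psi k shat_dist e.
  by rewrite ler_norml; move=> ? ? ?; apply/andP; split; lra.
- have := tree_bootstrap_support_le1 psi k shat_dist (unroot T).
  by rewrite ler_norml; move=> ? ?; apply/andP; split; lra.
Qed.
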